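(* Let $G$ be a finite group and $M$ a $\mathbb{B}[G]$-module generated by $n$ elements. Let $P\subseteq M$ be the poset of join-irreducible elements of $M$. Then $P$ does not contain a chain of length greater than $n$ (i.e. no totally ordered subset of $P$ has more than $n$ elements).
   Context: $\mathbb{B}=\{0,1\}$ is the Boolean semifield with $1+1=1$; $\mathbb{B}[G]$ is the group semiring. A $\mathbb{B}$-module is partially ordered by $x\le y$ iff $x+y=y$. An element $v$ is join-irreducible if $v\neq0$ and $v=a+b$ implies $v=a$ or $v=b$. *)

From HB Require Import structures.
From mathcomp Require Import all_boot all_fingroup.
Set Implicit Arguments. Unset Strict Implicit. Unset Printing Implicit Defensive.

(* A B[G]-module, for B the Boolean semifield and G a finite group.
   Unfolded: an additive commutative monoid (M,+,0) that is a B-module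
   (hence idempotent, x + x = (1+1)x = x), with the group elements of
   G acting by additive monoid endomorphisms (1 acts as identity,
   (gh)x = g(hx)).  A general scalar of B[G] is a subset S of G
   (a finite sum of group elements, coefficients in B), acting by
   S . x = sum_{g in S} g x : see [bscal] below. *)
Record BGModule (gT : finGroupType) := {
  carrier :> Type;
  madd : carrier -> carrier -> carrier;
  mzero : carrier;
  mact : gT -> carrier -> carrier;
  maddA : forall x y z, madd x (madd y z) = madd (madd x y) z;
  maddC : forall x y, madd x y = madd y x;
  madd0 : forall x, madd mzero x = x;
  maddxx : forall x, madd x x = x;
  mact1 : forall x, mact 1%g x = x;
  mactM : forall g h x, mact (g * h)%g x = mact g (mact h x);
  mactD : forall g x y, mact g (madd x y) = madd (mact g x) (mact g y);
  mact0 : forall g, mact g mzero = mzero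
}.

Section Defs.
Variables (gT : finGroupType) (M : BGModule gT).

Definition bscal (S : {set gT}) (x : M) : M :=
  \big[@madd _ M / @mzero _ M]_(g in S) mact g x.

Definition generated_by (n : nat) : Prop :=
  exists m : 'I_n -> M, forall x : M,
    exists S : 'I_n -> {set gT},
      x = \big[@madd _ M / @mzero _ M]_(i < n) bscal (S i) (m i).

Definition mle (x y : M) : Prop := madd x y = y.

Definition join_irreducible (v : M) : Prop :=
  v <> mzero M /\ forall a b : M, v = madd a b -> v = a \/ v = b.
End Defs.

From Pilot Require Import Defs.
From mathcomp Require Import all_boot all_fingroup.
From Stdlib Require Import ClassicalEpsilon.

Set Implicit Arguments. Unset Strict Implicit. Unset Printing Implicit Defensive.

(* A join-irreducible element equals one summand of any finite sum
   representing it, so every element of a chain of join-irreducibles is a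
   translate g m_i of a generator.  Two comparable translates of one another
   coincide: from x <= t x we get x <= t x <= t^2 x <= ... <= t^#[t] x = x.
   Hence distinct chain elements use distinct generators. *)

Section ModuleOrder.
Variables (gT : finGroupType) (M : BGModule gT).

Lemma mle_refl (x : M) : mle x x.
Proof. exact: maddxx. Qed.

Lemma mle_trans (x y z : M) : mle x y -> mle y z -> mle x z.
Proof. by rewrite /mle => Hxy Hyz; rewrite -Hyz maddA Hxy. Qed.

Lemma mle_anti (x y : M) : mle x y -> mle y x -> x = y.
Proof. by rewrite /mle => Hxy Hyx; rewrite -Hyx maddC. Qed.

Lemma mle_act (g : gT) (x y : M) :
  mle x y -> mle (Defs.mact g x) (Defs.mact g y).
Proof. by rewrite /mle -mactD => ->. Qed.

Lemma join_irreducible_big (I : Type) (r : seq I) (P : pred I) (F : I -> M)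
    (v : M) :
  join_irreducible v -> v = \big[@madd _ M/@mzero _ M]_(i <- r | P i) F i ->
  exists i, v = F i.
Proof.
move=> [v_neq0 v_irr]; elim: r => [|i r IHr]; first by rewrite big_nil.
rewrite big_cons; case: (P i) => // v_eq.
by have [->|] := v_irr _ _ v_eq; [exists i | ].
Qed.

Lemma join_irreducible_translate_gen (n : nat) (m : 'I_n -> M) (v : M) :
  (forall x : M, exists S : 'I_n -> {set gT},
     x = \big[@madd _ M/@mzero _ M]_(i < n) bscal (S i) (m i)) ->
  join_irreducible v -> exists p : 'I_n * gT, v = Defs.mact p.2 (m p.1).
Proof.
move=> gen v_irr; have [S v_eq] := gen v.
have [i v_Si] := join_irreducible_big v_irr v_eq.
have [g v_gi] := join_irreducible_big v_irr v_Si.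
by exists (i, g).
Qed.

Lemma mle_act_expg (t : gT) (x : M) :
  mle x (Defs.mact t x) -> forall r, mle x (Defs.mact (t ^+ r) x).
Proof.
move=> x_le_tx; elim=> [|r IHr]; first by rewrite expg0 mact1; apply: mle_refl.
by rewrite expgS mactM; apply: mle_trans x_le_tx (mle_act t IHr).
Qed.

Lemma mle_act_fixed (t : gT) (x : M) :
  mle x (Defs.mact t x) -> Defs.mact t x = x.
Proof.
move=> x_le_tx; apply: mle_anti => //.
have := mle_act t (mle_act_expg x_le_tx #[t]%g.-1).
by rewrite -mactM -expgS prednK ?order_gt0 // expg_order mact1.
Qed.

Lemma comparable_act_fixed (t : gT) (x : M) :
  mle x (Defs.mact t x) \/ mle (Defs.mact t x) x -> Defs.mact t x = x.
Proof.
case=> [|tx_le_x]; first exact: mle_act_fixed.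
have := mle_act_fixed (x := Defs.mact t x) (t := t^-1).
by rewrite -mactM mulVg mact1 => /(_ tx_le_x)/esym.
Qed.

End ModuleOrder.

Theorem proposition4p13 (gT : finGroupType) (M : BGModule gT) (n : nat) :
  generated_by M n ->
  forall (k : nat) (c : 'I_k -> M),
    injective c ->
    (forall i, join_irreducible (c i)) ->
    (forall i j, mle (c i) (c j) \/ mle (c j) (c i)) ->
    k <= n.
Proof.
move=> [m gen] k c c_inj c_irr c_chain.
pose p j := proj1_sig (constructive_indefinite_description _
  (join_irreducible_translate_gen gen (c_irr j))).
have c_p j : c j = Defs.mact (p j).2 (m (p j).1).
  by rewrite /p; case: constructive_indefinite_description.
suff gen_inj : injective (fun j => (p j).1).
  by have := leq_card _ gen_inj; rewrite !card_ord.
move=> j l /= same_gen; apply: c_inj.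
have c_l : c l = Defs.mact ((p l).2 * (p j).2^-1) (c j).
  by rewrite [c j]c_p [c l]c_p same_gen -mactM mulgKV.
by have := c_chain j l; rewrite c_l => /comparable_act_fixed ->.
Qed.
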